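(* Fix a reflection matrix $\mathbf\Phi$ and let $(\{\mathbf W_k^{\star\star}\}_{k\in\mathcal K},\mathbf R_0^{\star\star},u^{\star\star})$ be an optimal solution of problem (SDR4.2). Define, for each $k\in\mathcal K$, $$\mathbf w_k^{\mathrm{opt,II}}=(\mathbf h_k^H\mathbf W_k^{\star\star}\mathbf h_k)^{-1/2}\,\mathbf W_k^{\star\star}\mathbf h_k,\qquad \mathbf R_0^{\mathrm{opt,II}}=\mathbf R_0^{\star\star}+\sum_{k\in\mathcal K}\mathbf W_k^{\star\star}-\sum_{k\in\mathcal K}\mathbf w_k^{\mathrm{opt,II}}(\mathbf w_k^{\mathrm{opt,II}})^H .$$ Then these are well defined, $\mathbf R_0^{\mathrm{opt,II}}\succeq\mathbf 0$, and $(\{\mathbf w_k^{\mathrm{opt,II}}\},\mathbf R_0^{\mathrm{opt,II}},u^{\star\star})$ is an optimal solution of problem (P4.2). In particular (P4.2) and (SDR4.2) have the same optimal value.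
   Context: Let $M,N,K\ge1$ be integers and $\mathcal K=\{1,\dots,K\}$. Fixed data: $\mathbf G\in\mathbb C^{N\times M}$, $\mathbf h_{\mathrm d,k}\in\mathbb C^{M}$, $\mathbf h_{\mathrm r,k}\in\mathbb C^{N}$ ($k\in\mathcal K$), thresholds $\Gamma_k>0$, noise powers $\sigma_k^2>0$, power budget $P_0>0$, an angle $\theta$, spacing $d>0$ and wavelength $\lambda>0$. A reflection matrix is $\mathbf\Phi=\mathrm{diag}(\mathbf v)$, $\mathbf v\in\mathbb C^N$, $|v_n|=1$. For given $\mathbf\Phi$: $\mathbf h_k=\mathbf h_{\mathrm d,k}+\mathbf G^H\mathbf\Phi^H\mathbf h_{\mathrm r,k}$, $\mathbf H_k=\mathbf h_k\mathbf h_k^H$. Let $\mathbf a(\theta)\in\mathbb C^N$ have entries $e^{j2\pi (n-1)d\sin\theta/\lambda}$, $n=1,\dots,N$, and $\dot{\mathbf a}(\theta)$ its derivative in $\theta$; put $\mathbf b=\mathbf G^T\mathbf\Phi^T\mathbf a(\theta)$, $\dot{\mathbf b}=\mathbf G^T\mathbf\Phi^T\dot{\mathbf a}(\theta)$, $\mathbf B=\mathbf b\mathbf b^T$, $\dot{\mathbf B}=\dot{\mathbf b}\mathbf b^T+\mathbf b\dot{\mathbf b}^T$. For Hermitian $\mathbf R$ and $u\in\mathbb R$ let $$\mathcal M(\mathbf R,u)=\begin{bmatrix}\mathrm{tr}(\dot{\mathbf B}\mathbf R\dot{\mathbf B}^H)-u & \mathrm{tr}(\mathbf B\mathbf R\dot{\mathbf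 B}^H)\\ \mathrm{tr}(\dot{\mathbf B}\mathbf R\mathbf B^H) & \mathrm{tr}(\mathbf B\mathbf R\mathbf B^H)\end{bmatrix}.$$ Type-II SINR: $\gamma_k^{\mathrm{II}}=|\mathbf h_k^H\mathbf w_k|^2/(\sum_{i\ne k}|\mathbf h_k^H\mathbf w_i|^2+\sigma_k^2)$. Problem (P4.2) (fixed $\mathbf\Phi$): maximize $u$ over $\mathbf w_k\in\mathbb C^M$, Hermitian $\mathbf R_0\succeq\mathbf 0$, $u\in\mathbb R$, subject to $\mathcal M(\sum_k\mathbf w_k\mathbf w_k^H+\mathbf R_0,u)\succeq\mathbf 0$, $\gamma_k^{\mathrm{II}}\ge\Gamma_k$ for all $k$, and $\sum_k\|\mathbf w_k\|^2+\mathrm{tr}(\mathbf R_0)\le P_0$. Problem (SDR4.2) (fixed $\mathbf\Phi$): maximize $u$ over Hermitian $\mathbf W_k\succeq\mathbf 0$, $\mathbf R_0\succeq\mathbf 0$, $u\in\mathbb R$, subject to $\mathcal M(\sum_k\mathbf W_k+\mathbf R_0,u)\succeq\mathbf 0$, $\tfrac1{\Gamma_k}\mathrm{tr}(\mathbf H_k\mathbf W_k)-\sum_{i\ne k}\mathrm{tr}(\mathbf H_k\mathbf W_i)\ge\sigma_k^2$ for all $k$, and $\sum_k\mathrm{tr}(\mathbf W_k)+\mathrm{tr}(\mathbf R_0)\le P_0$. *)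

From HB Require Import structures.
From mathcomp Require Import all_boot all_order all_algebra.
From mathcomp Require Import complex.
From mathcomp Require Import reals trigo.
Set Implicit Arguments. Unset Strict Implicit. Unset Printing Implicit Defensive.
Import Order.TTheory GRing.Theory Num.Theory.
Local Open Scope ring_scope.
Local Open Scope complex_scope.

Section Defs.
Variable R : realType.
Local Notation C := R[i].

Definition hadj m n (A : 'M[C]_(m, n)) : 'M[C]_(n, m) := (map_mx conjc A)^T.

(* Hermitian positive semidefinite: A = A^H and x^H A x >= 0 for all x
   (order on C: 0 <= z iff z is real and nonnegative) *)
Definition psd n (A : 'M[C]_n) : Prop :=
  A = hadj A /\ forall x : 'cV[C]_n, 0 <= (hadj x *m A *m x) 0 0.

Definition hermitian n (A : 'M[C]_n) : Prop := A = hadj A.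

Definition expj (x : R) : C := (cos x) +i* (sin x).

(* steering vector a(theta), entries e^{j 2 pi (n-1) d sin(theta)/lambda}, n = 1..N
   (0-based index i = n-1) *)
Definition steer (N : nat) (d lam theta : R) : 'cV[C]_N :=
  \col_(i < N) expj (2 * pi * i%:R * d * sin theta / lam).

(* its derivative in theta (computed entrywise):
   j 2 pi (n-1) d cos(theta)/lambda * e^{j 2 pi (n-1) d sin(theta)/lambda} *)
Definition steer_dot (N : nat) (d lam theta : R) : 'cV[C]_N :=
  \col_(i < N) ('i * (2 * pi * i%:R * d * cos theta / lam)%:C
                   * expj (2 * pi * i%:R * d * sin theta / lam)).

Variables (M N K : nat).
Variables (G : 'M[C]_(N, M)) (hd : 'I_K -> 'cV[C]_M) (hr : 'I_K -> 'cV[C]_N).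
Variables (Gam sig2 : 'I_K -> R) (P0 theta d lam : R).
Variable v : 'cV[C]_N.

Definition Phi : 'M[C]_N := diag_mx v^T.

Definition hk (k : 'I_K) : 'cV[C]_M := hd k + hadj G *m hadj Phi *m hr k.
Definition Hk (k : 'I_K) : 'M[C]_M := hk k *m hadj (hk k).

Definition bv : 'cV[C]_M := G^T *m Phi^T *m steer N d lam theta.
Definition bdot : 'cV[C]_M := G^T *m Phi^T *m steer_dot N d lam theta.
Definition Bm : 'M[C]_M := bv *m bv^T.
Definition Bdot : 'M[C]_M := bdot *m bv^T + bv *m bdot^T.

Definition Mmat (Rx : 'M[C]_M) (u : R) : 'M[C]_2 :=
  \matrix_(i < 2, j < 2)
    if (i == 0) && (j == 0) then \tr (Bdot *m Rx *m hadj Bdot) - u%:C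
    else if (i == 0) then \tr (Bm *m Rx *m hadj Bdot)
    else if (j == 0) then \tr (Bdot *m Rx *m hadj Bm)
    else \tr (Bm *m Rx *m hadj Bm).

Definition cnorm2 m (x : 'cV[C]_m) : C := (hadj x *m x) 0 0.

Definition gain (k : 'I_K) (w : 'cV[C]_M) : C := `|(hadj (hk k) *m w) 0 0| ^+ 2.

Definition sinrII (w : 'I_K -> 'cV[C]_M) (k : 'I_K) : C :=
  gain k (w k) / (\sum_(i < K | i != k) gain k (w i) + (sig2 k)%:C).

Definition feasP42 (w : 'I_K -> 'cV[C]_M) (R0 : 'M[C]_M) (u : R) : Prop :=
  psd R0 /\
  psd (Mmat (\sum_(k < K) w k *m hadj (w k) + R0) u) /\
  (forall k, (Gam k)%:C <= sinrII w k) /\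
  \sum_(k < K) cnorm2 (w k) + \tr R0 <= P0%:C.

Definition optP42 (w : 'I_K -> 'cV[C]_M) (R0 : 'M[C]_M) (u : R) : Prop :=
  feasP42 w R0 u /\ forall w' R0' u', feasP42 w' R0' u' -> u' <= u.

Definition feasSDR (W : 'I_K -> 'M[C]_M) (R0 : 'M[C]_M) (u : R) : Prop :=
  (forall k, psd (W k)) /\ psd R0 /\
  psd (Mmat (\sum_(k < K) W k + R0) u) /\
  (forall k, (Gam k)^-1%:C * \tr (Hk k *m W k)
               - \sum_(i < K | i != k) \tr (Hk k *m W i) >= (sig2 k)%:C) /\
  \sum_(k < K) \tr (W k) + \tr R0 <= P0%:C.

Definition optSDR (W : 'I_K -> 'M[C]_M) (R0 : 'M[C]_M) (u : R) : Prop :=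
  feasSDR W R0 u /\ forall W' R0' u', feasSDR W' R0' u' -> u' <= u.

Definition hWh (W : 'I_K -> 'M[C]_M) (k : 'I_K) : C :=
  (hadj (hk k) *m W k *m hk k) 0 0.

Definition wopt (W : 'I_K -> 'M[C]_M) (k : 'I_K) : 'cV[C]_M :=
  (sqrtC (hWh W k))^-1 *: (W k *m hk k).

Definition R0opt (W : 'I_K -> 'M[C]_M) (R0 : 'M[C]_M) : 'M[C]_M :=
  R0 + \sum_(k < K) W k - \sum_(k < K) wopt W k *m hadj (wopt W k).

End Defs.

(* An optimal solution of the relaxation is mapped to a feasible point of
   (P4.2) with the same objective u; since every feasible point w of (P4.2)
   gives the feasible point W_k = w_k w_k^H of the relaxation, u is also an
   upper bound for (P4.2).  The map keeps the transmit covariance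
   sum_k W_k + R0 unchanged, so the sensing and power constraints carry over,
   and it keeps the useful gain h_k^H W_k h_k while not increasing the
   interference gains: W - (h^H W h)^{-1} (W h)(W h)^H is positive
   semidefinite for W psd (Cauchy-Schwarz for the semi-inner product W). *)

From HB Require Import structures.
From mathcomp Require Import all_boot all_order all_algebra.
From mathcomp Require Import complex.
From mathcomp Require Import reals trigo.
Import Order.TTheory GRing.Theory Num.Theory.
Local Open Scope ring_scope.
Local Open Scope complex_scope.
From mathcomp Require Import ring.
Set Implicit Arguments. Unset Strict Implicit. Unset Printing Implicit Defensive.

Lemma sinr_geE (F : numFieldType) (Gam g S s : F) :
  0 < Gam -> 0 < S + s -> (Gam <= g / (S + s)) = (s <= Gam^-1 * g - S).
Proof.
move=> Gam_gt0 Ss_gt0.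
by rewrite ler_pdivlMr // -ler_pdivlMl // lerBrDl.
Qed.

Section Adjoint.
Variable R : realType.
Local Notation C := R[i].

Lemma hadjE m n (A : 'M[C]_(m, n)) i j : hadj A i j = conjc (A j i).
Proof. by rewrite !mxE. Qed.

Lemma hadjK m n (A : 'M[C]_(m, n)) : hadj (hadj A) = A.
Proof. by apply/matrixP => i j; rewrite !hadjE conjcK. Qed.

Lemma hadjM m n p (A : 'M[C]_(m, n)) (B : 'M[C]_(n, p)) :
  hadj (A *m B) = hadj B *m hadj A.
Proof. by rewrite /hadj map_mxM trmx_mul. Qed.

Lemma hadjD m n (A B : 'M[C]_(m, n)) : hadj (A + B) = hadj A + hadj B.
Proof. by apply/matrixP => i j; rewrite !(hadjE, mxE) rmorphD. Qed.

Lemma hadjB m n (A B : 'M[C]_(m, n)) : hadj (A - B) = hadj A - hadj B.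
Proof. by apply/matrixP => i j; rewrite !(hadjE, mxE) rmorphB. Qed.

Lemma hadjZ m n a (A : 'M[C]_(m, n)) : hadj (a *: A) = conjc a *: hadj A.
Proof. by apply/matrixP => i j; rewrite !(hadjE, mxE) rmorphM. Qed.

Lemma hadj_sum m n I (F : 'I_I -> 'M[C]_(m, n)) :
  hadj (\sum_k F k) = \sum_k hadj (F k).
Proof.
apply/matrixP => i j; rewrite hadjE !summxE rmorph_sum.
by apply: eq_bigr => k _; rewrite hadjE.
Qed.

Lemma conjc_ge0 (z : C) : 0 <= z -> conjc z = z.
Proof. by move/ger0_Im; case: z => a b /= ->; rewrite oppr0. Qed.

Definition qform n (A : 'M[C]_n) (x y : 'cV[C]_n) : C := (hadj x *m A *m y) 0 0.

Lemma qformD n (A B : 'M[C]_n) (x y : 'cV[C]_n) :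
  qform (A + B) x y = qform A x y + qform B x y.
Proof. by rewrite /qform mulmxDr mulmxDl mxE. Qed.

Lemma qformB n (A B : 'M[C]_n) (x y : 'cV[C]_n) :
  qform (A - B) x y = qform A x y - qform B x y.
Proof. by rewrite /qform mulmxBr mulmxBl !mxE. Qed.

Lemma qformZ n a (A : 'M[C]_n) (x y : 'cV[C]_n) :
  qform (a *: A) x y = a * qform A x y.
Proof. by rewrite /qform -scalemxAr -scalemxAl mxE. Qed.

Lemma qform_sum n I (F : 'I_I -> 'M[C]_n) (x y : 'cV[C]_n) :
  qform (\sum_k F k) x y = \sum_k qform (F k) x y.
Proof. by rewrite /qform mulmx_sumr mulmx_suml summxE. Qed.

Lemma qform_hermitian n (A : 'M[C]_n) (x y : 'cV[C]_n) :
  A = hadj A -> conjc (qform A x y) = qform A y x.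
Proof. by move=> hA; rewrite /qform -hadjE !hadjM hadjK -hA mulmxA. Qed.

Lemma qform_outer n (w x : 'cV[C]_n) :
  qform (w *m hadj w) x x = `|(hadj x *m w) 0 0| ^+ 2.
Proof.
rewrite /qform sqr_normc mulmxA -(mulmxA _ (hadj w)) mxE big_ord1.
by rewrite -[hadj w *m x]hadjK hadjM hadjK hadjE.
Qed.

Lemma qform_subZ n (A : 'M[C]_n) (x h : 'cV[C]_n) (t : C) :
  qform A (x - t *: h) (x - t *: h) =
  qform A x x - t * qform A x h - conjc t * qform A h x
    + conjc t * t * qform A h h.
Proof.
rewrite /qform hadjB hadjZ !(mulmxBl, mulmxBr) -!scalemxAr -!scalemxAl.
by rewrite !mxE; ring.
Qed.

Lemma mxtrace_outerM n (h : 'cV[C]_n) (A : 'M[C]_n) :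
  \tr (h *m hadj h *m A) = qform A h h.
Proof. by rewrite -mulmxA mxtrace_mulC trace_mx11. Qed.

Lemma cnorm2_mxtrace n (w : 'cV[C]_n) : cnorm2 w = \tr (w *m hadj w).
Proof. by rewrite /cnorm2 mxtrace_mulC trace_mx11. Qed.

Lemma psd_outer n (w : 'cV[C]_n) : psd (w *m hadj w).
Proof.
split; first by rewrite hadjM hadjK.
by move=> x; rewrite -/(qform _ x x) qform_outer exprn_ge0.
Qed.

Lemma psdD n (A B : 'M[C]_n) : psd A -> psd B -> psd (A + B).
Proof.
move=> [hA A_ge0] [hB B_ge0]; split; first by rewrite hadjD -hA -hB.
by move=> x; rewrite -/(qform _ x x) qformD addr_ge0 ?A_ge0 ?B_ge0.
Qed.

Lemma psd_sum n I (F : 'I_I -> 'M[C]_n) :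
  (forall k, psd (F k)) -> psd (\sum_k F k).
Proof.
move=> F_psd; split.
  by rewrite hadj_sum; apply: eq_bigr => k _; rewrite -(F_psd k).1.
move=> x; rewrite -/(qform _ x x) qform_sum.
by apply: sumr_ge0 => k _; apply: (F_psd k).2.
Qed.

Lemma qform_outerM n (A : 'M[C]_n) (h x : 'cV[C]_n) : A = hadj A ->
  qform (A *m h *m hadj (A *m h)) x x = qform A x h * qform A h x.
Proof.
move=> hA; rewrite /qform hadjM -hA.
have -> : hadj x *m (A *m h *m (hadj h *m A)) *m x =
          (hadj x *m A *m h) *m (hadj h *m A *m x) by rewrite !mulmxA.
by rewrite mxE big_ord1.
Qed.

Lemma psd_sub_outer n (A : 'M[C]_n) h : psd A -> 0 < qform A h h ->
  psd (A - (qform A h h)^-1 *: (A *m h *m hadj (A *m h))).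
Proof.
move=> [hA A_ge0] c_gt0; set c := qform A h h.
have cc : conjc c^-1 = c^-1 by rewrite conjc_inv conjc_ge0 // ltW.
split; first by rewrite hadjB hadjZ cc -(psd_outer (A *m h)).1 -hA.
move=> x; rewrite -/(qform _ x x) qformB qformZ qform_outerM //.
(* Cauchy-Schwarz: the form is nonnegative at x - (h^H A x / c) h. *)
have := A_ge0 (x - (qform A h x / c) *: h).
rewrite -/(qform _ _ _) qform_subZ rmorphM /= qform_hermitian // cc.
by rewrite -/c; congr (0 <= _); field; rewrite gt_eqF.
Qed.

Lemma outer_invsqrtCZ n (c : C) (y : 'cV[C]_n) : 0 <= c ->
  ((sqrtC c)^-1 *: y) *m hadj ((sqrtC c)^-1 *: y) = c^-1 *: (y *m hadj y).
Proof.
move=> c_ge0; have s_ge0 : 0 <= (sqrtC c)^-1 by rewrite invr_ge0 sqrtC_ge0.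
rewrite hadjZ conjc_ge0 // -scalemxAl -scalemxAr scalerA.
by rewrite -expr2 exprVn sqrtCK.
Qed.

End Adjoint.

Section Beamforming.
Variable R : realType.
Local Notation C := R[i].
Variables (M N K : nat).
Variables (G : 'M[C]_(N, M)) (hd : 'I_K -> 'cV[C]_M) (hr : 'I_K -> 'cV[C]_N).
Variables (Gam sig2 : 'I_K -> R) (P0 theta d lam : R) (v : 'cV[C]_N).
Hypotheses (Gam_gt0 : forall k, 0 < Gam k) (sig2_gt0 : forall k, 0 < sig2 k).

Local Notation h := (hk G hd hr v).
Local Notation gain := (gain G hd hr v).
Local Notation trHk k X := (\tr (Hk G hd hr v k *m X)).
Local Notation feasSDR := (feasSDR G hd hr Gam sig2 P0 theta d lam v).
Local Notation feasP42 := (feasP42 G hd hr Gam sig2 P0 theta d lam v).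
Local Notation wopt := (wopt G hd hr v).
Local Notation R0opt := (R0opt G hd hr v).
Local Notation hWh := (hWh G hd hr v).

Lemma mxtrace_HkM k X : trHk k X = qform X (h k) (h k).
Proof. exact: mxtrace_outerM. Qed.

Lemma gainE k w : gain k w = qform (w *m hadj w) (h k) (h k).
Proof. by rewrite qform_outer. Qed.

Lemma sinrII_geE (w : 'I_K -> 'cV[C]_M) k :
  ((Gam k)%:C <= sinrII G hd hr sig2 v w k) =
  ((sig2 k)%:C <= (Gam k)^-1%:C * trHk k (w k *m hadj (w k))
                   - \sum_(i < K | i != k) trHk k (w i *m hadj (w i))).
Proof.
rewrite /sinrII sinr_geE ?ltcR // ?fmorphV; last first.
  by apply: ltr_wpDl; rewrite ?ltcR // sumr_ge0 // => i _; rewrite exprn_ge0.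
rewrite mxtrace_HkM -gainE; congr (_ <= _ - _).
by apply: eq_bigr => i _; rewrite mxtrace_HkM -gainE.
Qed.

Lemma feasSDR_outer w R0 u :
  feasP42 w R0 u -> feasSDR (fun k => w k *m hadj (w k)) R0 u.
Proof.
move=> [R0_psd [Mmat_psd [sinr_ge power_le]]].
split; first by move=> k; apply: psd_outer.
do 2!split=> //; split; first by move=> k; rewrite -sinrII_geE.
by rewrite -(eq_bigr _ (fun k _ => cnorm2_mxtrace (w k))).
Qed.

Section Rank_one_extraction.
Variables (W : 'I_K -> 'M[C]_M) (R0 : 'M[C]_M) (u : R).
Hypothesis W_feas : feasSDR W R0 u.

Lemma hWh_gt0 k : 0 < hWh W k.
Proof.
case: W_feas => W_psd [_ [_ [sinr_ge _]]].
have := sinr_ge k; rewrite mxtrace_HkM => useful_ge.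
have interf_ge0 : 0 <= \sum_(i < K | i != k) trHk k (W i).
  by apply: sumr_ge0 => i _; rewrite mxtrace_HkM; apply: (W_psd i).2.
have : 0 < (Gam k)^-1%:C * hWh W k.
  apply: lt_le_trans (le_trans useful_ge _); first by rewrite ltcR.
  by rewrite lerBlDr lerDl.
by rewrite pmulr_rgt0 // ltcR invr_gt0.
Qed.

Lemma wopt_outer k : wopt W k *m hadj (wopt W k) =
  (hWh W k)^-1 *: (W k *m h k *m hadj (W k *m h k)).
Proof. exact/outer_invsqrtCZ/ltW/hWh_gt0. Qed.

Lemma psd_sub_wopt k : psd (W k - wopt W k *m hadj (wopt W k)).
Proof.
by rewrite wopt_outer; apply: psd_sub_outer (hWh_gt0 k); case: W_feas.
Qed.

Lemma psd_R0opt : psd (R0opt W R0).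
Proof.
rewrite /R0opt -addrA -sumrB; case: W_feas => _ [R0_psd _].
by apply: psdD => //; apply: psd_sum psd_sub_wopt.
Qed.

Lemma gain_wopt k : gain k (wopt W k) = hWh W k.
Proof.
have c_gt0 := hWh_gt0 k.
rewrite gainE wopt_outer qformZ qform_outer mulmxA -/(qform _ _ _).
by rewrite ger0_norm ?ltW // expr2 mulKf // gt_eqF.
Qed.

Lemma gain_wopt_le k i : gain k (wopt W i) <= qform (W i) (h k) (h k).
Proof. by rewrite gainE -subr_ge0 -qformB; apply: (psd_sub_wopt i).2. Qed.

Lemma feasP42_wopt : feasP42 (wopt W) (R0opt W R0) u.
Proof.
have cov : \sum_k wopt W k *m hadj (wopt W k) + R0opt W R0 = \sum_k W k + R0.
  by rewrite /R0opt addrC subrK addrC.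
case: W_feas => _ [_ [Mmat_psd [sinr_ge power_le]]].
split; first exact: psd_R0opt.
split; first by rewrite cov.
split=> [k|].
  rewrite sinrII_geE; apply: le_trans (sinr_ge k) _; apply: lerB.
    by rewrite !mxtrace_HkM -gainE gain_wopt.
  by apply: ler_sum => i _; rewrite !mxtrace_HkM -gainE gain_wopt_le.
rewrite (eq_bigr _ (fun k _ => cnorm2_mxtrace (wopt W k))) -raddf_sum.
by rewrite -mxtraceD cov mxtraceD raddf_sum.
Qed.

End Rank_one_extraction.
End Beamforming.

Theorem proposition8 (R : realType) (M N K : nat)
  (G : 'M[R[i]]_(N, M)) (hd : 'I_K -> 'cV[R[i]]_M) (hr : 'I_K -> 'cV[R[i]]_N)
  (Gam sig2 : 'I_K -> R) (P0 theta d lam : R) (v : 'cV[R[i]]_N)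
  (HM : (0 < M)%N) (HN : (0 < N)%N) (HK : (0 < K)%N)
  (HGam : forall k, 0 < Gam k) (Hsig : forall k, 0 < sig2 k) (HP0 : 0 < P0)
  (Hd : 0 < d) (Hlam : 0 < lam)
  (Hv : forall n : 'I_N, `|v n 0| = 1)
  (W : 'I_K -> 'M[R[i]]_M) (R0 : 'M[R[i]]_M) (u : R)
  (Hopt : optSDR G hd hr Gam sig2 P0 theta d lam v W R0 u) :
  (forall k, 0 < hWh G hd hr v W k) /\
  psd (R0opt G hd hr v W R0) /\
  optP42 G hd hr Gam sig2 P0 theta d lam v
    (wopt G hd hr v W) (R0opt G hd hr v W R0) u.
Proof.
case: Hopt => W_feas W_max.
split; first exact (hWh_gt0 HGam Hsig W_feas).
split; first exact (psd_R0opt HGam Hsig W_feas).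
split; first exact (feasP42_wopt HGam Hsig W_feas).
by move=> w' R0' u' /(feasSDR_outer HGam Hsig); apply: W_max.
Qed.
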